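(* Let $\beta>0$ and $\theta>0$, and let $\mathcal{D}=\{(u_1,u_2)\in(0,1)^2:u_1+u_2<1\}$. Define the $2\times2$ matrix $A(u)$ by the requirement that the system $$\partial_tu_1=\operatorname{div}\Big(\nabla(u_1^2)-u_1\nabla\big(u_1^2+\beta\theta u_1u_2^2+\beta u_2^2\big)\Big),\quad \partial_tu_2=\operatorname{div}\Big(\nabla(\beta\theta u_1u_2^2+\beta u_2^2)-u_2\nabla\big(u_1^2+\beta\theta u_1u_2^2+\beta u_2^2\big)\Big)$$ reads $\partial_tu=\operatorname{div}(A(u)\nabla u)$, $u=(u_1,u_2)$. Then, for $\theta>0$ sufficiently large, there exists $(u_1,u_2)\in\mathcal{D}$ with $u_1\in(0,1/3)$, $u_2\in(2/3,1)$ such that at least one eigenvalue of $A(u)$ has a negative real part.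
   Context: This is the tumor-growth model of Jackson and Byrne: the volume-filling multiphase system with $n=2$, unit drag coefficients, $r_{ij}=0$ and intraphase pressures $q_1(u)=q_{11}u_1+q_{12}u_2$, $q_2(u)=q_{21}u_1+q_{22}u_2$ with $q_{11}=1$, $q_{12}=0$, $q_{21}=\beta\theta u_2$, $q_{22}=\beta$; the system is $\partial_tu_i=\operatorname{div}(\nabla(u_iq_i(u))-u_i\sum_j\nabla(u_jq_j(u)))$. *)

From HB Require Import structures.
From mathcomp Require Import all_boot all_order all_algebra.
From mathcomp Require Import complex.
From mathcomp Require Import reals.
Set Implicit Arguments. Unset Strict Implicit. Unset Printing Implicit Defensive.
Import Order.TTheory GRing.Theory Num.Theory.
Local Open Scope ring_scope.

(* Jackson–Byrne model, n = 2.  With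
     p(u) := u1 q1(u) + u2 q2(u) = u1^2 + beta*theta*u1*u2^2 + beta*u2^2,
   the flux of component i is  grad(u_i q_i(u)) - u_i grad p(u),
   and A(u) is the matrix with  (A(u) grad u)_i = that flux, i.e.
     A_ij(u) = d_j (u_i q_i(u)) - u_i d_j p(u),
   computed explicitly below (d_1 p = 2u1 + beta theta u2^2,
   d_2 p = 2 beta theta u1 u2 + 2 beta u2). *)
Definition Amat (R : realType) (beta theta u1 u2 : R) : 'M[R]_2 :=
  \matrix_(i < 2, j < 2)
    match val i, val j with
    | 0%N, 0%N => 2 * u1 - u1 * (2 * u1 + beta * theta * u2 ^+ 2)
    | 0%N, _   => - u1 * (2 * beta * theta * u1 * u2 + 2 * beta * u2)
    | _, 0%N   => beta * theta * u2 ^+ 2 - u2 * (2 * u1 + beta * theta * u2 ^+ 2)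
    | _, _     => (2 * beta * theta * u1 * u2 + 2 * beta * u2)
                  - u2 * (2 * beta * theta * u1 * u2 + 2 * beta * u2)
    end.

Definition inD (R : realType) (u1 u2 : R) : Prop :=
  0 < u1 < 1 /\ 0 < u2 < 1 /\ u1 + u2 < 1.

From HB Require Import structures.
From mathcomp Require Import all_boot all_order all_algebra.
From mathcomp Require Import complex.
From mathcomp Require Import reals ring lra.
Import Order.TTheory GRing.Theory Num.Theory.
Local Open Scope ring_scope.

(* At u = (1/8, 3/4) the trace of A(u) is (28 + 48 beta - 3 beta theta) / 128, which is
   negative once theta is large.  The eigenvalues of A(u) in C sum to its trace, so one of
   them has negative real part. *)

Lemma mxtrace_eigenvalues {F : closedFieldType} {n} (A : 'M[F]_n.+1) :
  exists2 rs : seq F, {in rs, forall r, eigenvalue A r} & \tr A = \sum_(r <- rs) r.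
Proof.
have [rs charA] := closed_field_poly_normal (char_poly A).
rewrite (monicP (char_poly_monic A)) scale1r in charA.
exists rs => [r r_rs | ].
  by rewrite eigenvalue_root_char charA root_prod_XsubC.
have [size_rs] : n.+2 = (size rs).+1.
  by rewrite -(size_char_poly A) charA size_prod_XsubC.
apply: oppr_inj; rewrite -char_poly_trace // charA.
by rewrite -coefPn_prod_XsubC -size_rs.
Qed.

Lemma eigenvalue_Re_lt0 (R : rcfType) n (A : 'M[R]_n.+1) : \tr A < 0 ->
  exists lam : R[i], eigenvalue (map_mx (real_complex R) A) lam /\ complex.Re lam < 0.
Proof.
move=> trA_lt0.
have [rs eig_rs tr_sum] := mxtrace_eigenvalues (map_mx (real_complex R) A).
have Re_sum : \sum_(r <- rs) complex.Re r = \tr A.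
  rewrite -(raddf_sum (@complex.Re R : Rcomplex R -> R)) -tr_sum /mxtrace raddf_sum.
  by apply: eq_bigr => i _; rewrite mxE.
have /hasP [r r_rs Re_r] : has (fun r => complex.Re r < 0) rs.
  apply: contraLR trA_lt0 => /hasPn Re_ge0.
  rewrite -leNgt -Re_sum big_seq sumr_ge0 // => r r_rs.
  by rewrite leNgt Re_ge0.
by exists r; split; [apply: eig_rs|].
Qed.

Lemma mxtrace_Amat (R : realType) (beta theta u1 u2 : R) :
  \tr (Amat beta theta u1 u2) =
    2 * u1 - u1 * (2 * u1 + beta * theta * u2 ^+ 2)
    + (1 - u2) * (2 * beta * theta * u1 * u2 + 2 * beta * u2).
Proof. by rewrite /mxtrace !big_ord_recl big_ord0 !mxE /=; ring. Qed.

Theorem lemma10 (R : realType) (beta : R) (hbeta : 0 < beta) :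
  exists theta0 : R, forall theta : R, theta0 <= theta -> 0 < theta ->
    exists u1 u2 : R,
      [/\ inD u1 u2, 0 < u1 < 1 / 3, 2 / 3 < u2 < 1 &
        exists lam : R[i],
          eigenvalue (map_mx (real_complex R) (Amat beta theta u1 u2)) lam
          /\ complex.Re lam < 0].
Proof.
exists ((10 + 16 * beta) / beta) => theta theta_ge _.
have beta_theta_ge : 10 + 16 * beta <= beta * theta.
  by rewrite [beta * _]mulrC -ler_pdivrMr.
exists (1 / 8), (3 / 4); split; rewrite /inD; try lra.
by apply: eigenvalue_Re_lt0; rewrite mxtrace_Amat; lra.
Qed.
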